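(* Let $f:\mathbb{R}^d\times\mathcal{X}\to\mathbb{R}$ be differentiable in $\theta$, with $\mathcal{X}$ a subset of a Euclidean space and $\sup_{x\in\mathcal{X}}\Vert x\Vert\le D<\infty$, and assume (A1): there are $K_1,K_2>0$ with $\Vert\nabla f(\theta,x)-\nabla f(\hat\theta,\hat x)\Vert\le K_1\Vert\theta-\hat\theta\Vert+K_2\Vert x-\hat x\Vert(\Vert\theta\Vert+\Vert\hat\theta\Vert+1)$ for all $\theta,\hat\theta\in\mathbb{R}^d$, $x,\hat x\in\mathcal{X}$. Let $X_n=(x_1,\dots,x_n)$, $\hat X_n=(\hat x_1,\dots,\hat x_n)\in\mathcal{X}^n$ differ in at most one index, $b\in\{1,\dots,n\}$, $\eta>0$, and let $P,\hat P$ be the transition kernels of the SGD chains $\theta_k=\theta_{k-1}-\frac\eta b\sum_{i\in\Omega_k}\nabla f(\theta_{k-1},x_i)$ and $\hat\theta_k=\hat\theta_{k-1}-\frac\eta b\sum_{i\in\Omega_k}\nabla f(\hat\theta_{k-1},\hat x_i)$, where $(\Omega_k)$ are i.i.d. uniformly random $b$-subsets of $\{1,\dots,n\}$. Let $\hat\theta_*$ be a minimizer of $\hat F(\theta,\hat X_n):=\frac1n\sum_{i=1}^nf(\theta,\hat x_i)$ and $\hat V(\theta)=1+\Vert\theta-\hat\theta_*\Vert^2$. Then $$\sup_{\theta\in\mathbb{R}^d}\frac{\mathcal{W}_1(\delta_\theta P,\delta_\theta\hat P)}{\hat V(\theta)}\le\frac{4DK_2\eta}{n}\left(2\Vert\h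at\theta_*\Vert+1\right).$$
   Context: $\delta_\theta P=P(\theta,\cdot)$; $\mathcal{W}_1$ is the 1-Wasserstein distance. *)

From mathcomp Require Import all_boot all_order all_algebra.
From mathcomp Require Import all_classical all_reals all_analysis.
From mathcomp Require Import matrix_topology matrix_normedtype.
Import numFieldNormedType.Exports.
Set Implicit Arguments. Unset Strict Implicit. Unset Printing Implicit Defensive.
Import Order.TTheory GRing.Theory Num.Theory.
Local Open Scope ring_scope.
Local Open Scope classical_set_scope.

Definition enorm {R : realType} {m : nat} (v : 'rV[R]_m) : R :=
  Num.sqrt (\sum_(i < m) v ord0 i ^+ 2).

Definition edist {R : realType} {m : nat} (u v : 'rV[R]_m) : R := enorm (u - v).

Definition borelRV (R : realType) (d : nat) :=
  g_sigma_algebraType (open : set (set 'rV[R]_d)).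

Definition grad {R : realType} {d : nat} (g : 'rV[R]_d -> R) (t : 'rV[R]_d)
  : 'rV[R]_d :=
  \row_(i < d) ('D_(delta_mx 0 i) g t).

Definition emp_risk {R : realType} {d m n : nat}
  (f : 'rV[R]_d -> 'rV[R]_m -> R) (X : 'I_n -> 'rV[R]_m) (t : 'rV[R]_d) : R :=
  n%:R^-1 * \sum_(i < n) f t (X i).

Definition sgd_step {R : realType} {d m n : nat} (eta : R) (b : nat)
  (f : 'rV[R]_d -> 'rV[R]_m -> R) (X : 'I_n -> 'rV[R]_m)
  (t : 'rV[R]_d) (Om : {set 'I_n}) : 'rV[R]_d :=
  t - (eta / b%:R) *: \sum_(i in Om) grad (f ^~ (X i)) t.

(* delta_theta P : the law of the next SGD iterate started at theta, where
   the minibatch Omega is uniform among the b-subsets of {1,...,n}. *)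
Definition sgd_kernel {R : realType} {d m n : nat} (eta : R) (b : nat)
  (f : 'rV[R]_d -> 'rV[R]_m -> R) (X : 'I_n -> 'rV[R]_m) (t : 'rV[R]_d)
  : set (borelRV R d) -> \bar R :=
  fun A => (\sum_(Om : {set 'I_n} | #|Om| == b)
              ((('C(n, b))%:R)^-1)%:E
              * \d_(sgd_step eta b f X t Om : borelRV R d) A)%E.

Definition coupling {R : realType} {d : nat}
  (mu nu : set (borelRV R d) -> \bar R)
  (pi : probability (borelRV R d * borelRV R d)%type R) : Prop :=
  (forall A, measurable A -> pi (A `*` setT) = mu A) /\
  (forall B, measurable B -> pi (setT `*` B) = nu B).

Definition W1 {R : realType} {d : nat} (mu nu : set (borelRV R d) -> \bar R)
  : \bar R :=
  ereal_inf [set (\int[pi]_z (edist (z.1 : 'rV[R]_d) (z.2 : 'rV[R]_d))%:E)%E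
            | pi in [set pi | coupling mu nu pi]].

From Pilot Require Import Defs.
From mathcomp Require Import all_boot all_order all_algebra.
From mathcomp Require Import all_classical all_reals all_analysis.
From mathcomp Require Import matrix_topology matrix_normedtype.
Import numFieldNormedType.Exports.
Import Order.TTheory GRing.Theory Num.Theory.
Local Open Scope ring_scope.
Local Open Scope classical_set_scope.
From mathcomp Require Import perm ring lra.
Set Implicit Arguments. Unset Strict Implicit. Unset Printing Implicit Defensive.

(* Couple one step of the two chains synchronously, i.e. let both use the same
   minibatch Omega.  If the data sets differ only at index j, the two iterates
   coincide unless j is in Omega, and then they differ by
   (eta / b) |grad f(theta, xh_j) - grad f(theta, x_j)|
     <= (eta / b) 2 D K2 (2 |theta| + 1)
   by (A1) at theta = theta'.  As j lies in a uniform b-subset with probability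
   b / n, W1 <= (2 D K2 eta / n) (2 |theta| + 1); finally
   |theta| <= |theta - thstar| + |thstar| gives
   2 |theta| + 1 <= 2 (2 |thstar| + 1) V(theta). *)

Lemma cauchy_schwarz (R : realDomainType) m (u v : 'I_m -> R) :
  (\sum_i u i * v i) ^+ 2 <= (\sum_i u i ^+ 2) * (\sum_i v i ^+ 2).
Proof.
set A := \sum_i u i ^+ 2; set B := \sum_i v i ^+ 2; set C := \sum_i u i * v i.
have A0 : 0 <= A by apply: sumr_ge0 => i _; exact: sqr_ge0.
have [A_eq0|A_neq0] := eqVneq A 0.
  have u0 i : u i = 0.
    by apply/eqP; rewrite -sqrf_eq0; apply/eqP/(psumr_eq0P _ A_eq0) => // j _; exact: sqr_ge0.
  by rewrite /C big1 ?expr0n ?mulr_ge0 ?sumr_ge0// => i _; rewrite ?u0 ?mul0r ?sqr_ge0.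
have sq_sum : \sum_i (C * u i - A * v i) ^+ 2 = A * (A * B - C ^+ 2).
  rewrite (eq_bigr (fun i => C ^+ 2 * u i ^+ 2 + (- (2 * C * A)) * (u i * v i)
                             + A ^+ 2 * v i ^+ 2)); last by move=> i _; ring.
  by rewrite !big_split -!mulr_sumr -/A -/B -/C /=; ring.
have : 0 <= A * (A * B - C ^+ 2).
  by rewrite -sq_sum; apply: sumr_ge0 => i _; exact: sqr_ge0.
by rewrite pmulr_rge0 ?subr_ge0 // lt_def A_neq0.
Qed.

Section euclidean_norm.
Variables (R : realType) (m : nat).
Implicit Types u v : 'rV[R]_m.

Lemma enorm_ge0 v : 0 <= enorm v.
Proof. exact: sqrtr_ge0. Qed.

Lemma enorm0 : enorm (0 : 'rV[R]_m) = 0.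
Proof. by rewrite /enorm big1 ?sqrtr0 // => i _; rewrite mxE expr0n. Qed.

Lemma enormN v : enorm (- v) = enorm v.
Proof. by rewrite /enorm; congr Num.sqrt; apply: eq_bigr => i _; rewrite mxE sqrrN. Qed.

Lemma enormZ (c : R) v : enorm (c *: v) = `|c| * enorm v.
Proof.
rewrite /enorm -sqrtr_sqr -sqrtrM ?sqr_ge0 //; congr Num.sqrt.
by rewrite mulr_sumr; apply: eq_bigr => i _; rewrite mxE; ring.
Qed.

Lemma enormD u v : enorm (u + v) <= enorm u + enorm v.
Proof.
rewrite /enorm; set A := \sum_i u ord0 i ^+ 2; set B := \sum_i v ord0 i ^+ 2.
set C := \sum_i u ord0 i * v ord0 i.
have A0 : 0 <= A by apply: sumr_ge0 => i _; exact: sqr_ge0.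
have B0 : 0 <= B by apply: sumr_ge0 => i _; exact: sqr_ge0.
have -> : \sum_i (u + v) ord0 i ^+ 2 = A + 2 * C + B.
  rewrite /A /B /C mulr_sumr -!big_split /=.
  by apply: eq_bigr => i _; rewrite mxE; ring.
have C_le : C <= Num.sqrt A * Num.sqrt B.
  rewrite -sqrtrM // (le_trans (ler_norm C)) // -sqrtr_sqr ler_sqrt ?mulr_ge0 //.
  exact: cauchy_schwarz.
rewrite -[leRHS]ger0_norm ?addr_ge0 ?sqrtr_ge0 // -sqrtr_sqr ler_sqrt ?sqr_ge0 //.
by rewrite sqrrD !sqr_sqrtr //; lra.
Qed.

Lemma enormB_le u v : enorm (u - v) <= enorm u + enorm v.
Proof. by rewrite -(enormN v) enormD. Qed.

End euclidean_norm.

Section draws.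
Local Open Scope nat_scope.
Variables (T : finType) (k : nat).

Lemma card_draws_mem_sym (x y : T) :
  #|[set A : {set T} | #|A| == k & x \in A]| = #|[set A : {set T} | #|A| == k & y \in A]|.
Proof.
pose sw (A : {set T}) := tperm x y @: A.
have swK : involutive sw.
  by move=> A; rewrite /sw -imset_comp -[RHS]imset_id; apply: eq_imset => z /=; rewrite tpermK.
rewrite -(card_imset _ (inv_inj swK)) (can2_imset_pre _ swK swK).
apply: eq_card => A; rewrite !inE /sw card_imset; last exact: perm_inj.
by rewrite -{1}(tpermR x y) mem_imset //; exact: perm_inj.
Qed.

Lemma sum_draws_mem (x : T) :
  #|T| * \sum_(A : {set T} | #|A| == k) (x \in A) = k * 'C(#|T|, k).
Proof.
have card_mem y : #|[set A : {set T} | #|A| == k & y \in A]|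
                 = \sum_(A : {set T} | #|A| == k) (y \in A).
  rewrite -sum1_card (eq_bigl (fun A : {set T} => (#|A| == k) && (y \in A))).
    by rewrite big_mkcondr.
  by move=> A; rewrite !inE.
transitivity (\sum_(y : T) \sum_(A : {set T} | #|A| == k) (y \in A)).
  rewrite -sum_nat_const; apply: eq_bigr => y _.
  by rewrite -!card_mem; exact: card_draws_mem_sym.
rewrite exchange_big /= -card_draws cardsE mulnC -sum_nat_const.
apply: eq_big => // A /eqP <-; rewrite -sum1_card [RHS]big_mkcond /=.
by apply: eq_bigr => i _; case: (i \in A).
Qed.
End draws.

Lemma measurable_coord (R : realType) d (i : 'I_d) :
  measurable_fun [set: borelRV R d] (fun v : 'rV[R]_d => v ord0 i).
Proof.
apply: (measurability _ (measurable_realfun.RGenOpens.measurableE R)).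
move=> _ [_ [a [b ->]] <-]; rewrite setTI; apply: sub_gen_smallest.
by move/continuousP: (@coord_continuous R 1 d ord0 i); apply; exact: interval_open.
Qed.

Lemma measurable_edist (R : realType) d :
  measurable_fun [set: borelRV R d * borelRV R d]
    (fun z : borelRV R d * borelRV R d => Defs.edist (z.1 : 'rV[R]_d) z.2).
Proof.
apply: (measurableT_comp (measurable_realfun.continuous_measurable_fun (@sqrt_continuous R))).
apply: measurable_sum => i.
apply: (measurableT_comp (f := fun r : R => r ^+ 2)).
  by apply: measurable_realfun.continuous_measurable_fun; exact: exprn_continuous.
have -> : (fun z : borelRV R d * borelRV R d => (z.1 - z.2) ord0 i) =
    (fun z => (z.1 : 'rV_d) ord0 i) \- (fun z => (z.2 : 'rV_d) ord0 i).
  by apply/funext => z; rewrite !mxE.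
apply: measurable_realfun.measurable_funB.
  exact: measurableT_comp (measurable_coord i) measurable_fst.
exact: measurableT_comp (measurable_coord i) measurable_snd.
Qed.

Section empirical.
Context {d : measure_display} {T : measurableType d} (R : realType).
Variables (x0 : T) (s : seq T).

(* [x0] is a junk point, relevant only when [s] is empty. *)
Definition empirical : probability T R :=
  mnormalize (msum (fun k => \d_(nth x0 s k)) (size s)) \d_x0.

Hypothesis s_neq0 : s != [::].

Let dirac_sum : {measure set T -> \bar R} :=
  msum (fun k => @dirac _ T (nth x0 s k) R) (size s).

Let dirac_sumE A : dirac_sum A = (\sum_(z <- s) \1_A z)%:E.
Proof.
rewrite /dirac_sum /msum -sumEFin (big_nth x0) big_mkord.
by apply: eq_bigr => k _; rewrite /= diracE indicE.
Qed.

Let size_gt0 : (0 < (size s)%:R :> R).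
Proof. by rewrite ltr0n lt0n size_eq0. Qed.

Lemma empiricalE A : empirical A = ((size s)%:R^-1 * \sum_(z <- s) \1_A z)%:E.
Proof.
have dirac_sumT : dirac_sum setT = (size s)%:R%:E.
  rewrite dirac_sumE (big_nth x0) big_mkord (eq_bigr (fun=> 1)) ?sumr_const ?card_ord //.
  by move=> k _; rewrite indicT.
rewrite /empirical /= /mnormalize /= -/dirac_sum dirac_sumT /= ifF.
  by rewrite dirac_sumE -EFinM mulrC.
by rewrite eqe gt_eqF.
Qed.

Lemma integral_empirical (g : T -> R) :
  measurable_fun setT g -> (forall z, 0 <= g z) ->
  (\int[empirical]_z (g z)%:E = ((size s)%:R^-1 * \sum_(z <- s) g z)%:E)%E.
Proof.
move=> mg g0.
have c0 : 0 <= (size s)%:R^-1 :> R by rewrite invr_ge0 ltW.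
pose c : {nonneg R} := NngNum c0.
have -> : empirical = mscale c dirac_sum :> (set T -> \bar R).
  by apply/funext => A; rewrite empiricalE /mscale /= dirac_sumE -EFinM.
rewrite ge0_integral_mscale //; last 2 first.
- exact/measurable_realfun.measurable_EFinP.
- by move=> z _; rewrite lee_fin.
rewrite ge0_integral_measure_sum //; last 2 first.
- by move=> z _; rewrite lee_fin.
- exact/measurable_realfun.measurable_EFinP.
rewrite (big_nth x0) big_mkord EFinM -sumEFin; congr (_ * _)%E; apply: eq_bigr => k _.
by rewrite integral_dirac ?diracT ?mul1e //; exact/measurable_realfun.measurable_EFinP.
Qed.

End empirical.

Section W1_uniform_mixture.
Variables (R : realType) (d : nat).

Lemma W1_le_coupling (mu nu : set (borelRV R d) -> \bar R) pi : coupling mu nu pi ->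
  (W1 mu nu <= \int[pi]_z (Defs.edist (z.1 : 'rV[R]_d) z.2)%:E)%E.
Proof. by move=> pi_mu_nu; apply: ereal_inf_lbound; exists pi. Qed.

Variables (I : finType) (P : pred I).

Definition unif_mixture (p : I -> 'rV[R]_d) : set (borelRV R d) -> \bar R :=
  fun A => (\sum_(i | P i) (#|P|%:R^-1)%:E * \d_(p i : borelRV R d) A)%E.

Lemma W1_unif_mixture_le (p q : I -> 'rV[R]_d) : (0 < #|P|)%N ->
  (W1 (unif_mixture p) (unif_mixture q)
     <= (#|P|%:R^-1 * \sum_(i | P i) Defs.edist (p i) (q i))%:E)%E.
Proof.
move=> P_gt0.
pose s := [seq (p i, q i) : borelRV R d * borelRV R d | i <- enum P].
have size_s : size s = #|P| by rewrite size_map -cardE.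
have s_neq0 : s != [::] by rewrite -size_eq0 size_s -lt0n.
have sum_s F : \sum_(z <- s) F z = \sum_(i | P i) F (p i, q i) :> R.
  by rewrite big_map big_enum.
have mixtureE r A : unif_mixture r A = (#|P|%:R^-1 * \sum_(i | P i) \1_A (r i))%:E.
  by rewrite /unif_mixture mulr_sumr -sumEFin; apply: eq_bigr => i _; rewrite diracE EFinM.
(* The synchronous coupling: draw i uniformly from P and pair p i with q i. *)
pose pi := empirical R (0 : borelRV R d, 0 : borelRV R d) s.
apply: le_trans (W1_le_coupling (pi := pi) _) _.
  split=> A _; rewrite empiricalE // mixtureE sum_s size_s;
  by congr (_ * _)%:E; apply: eq_bigr => i _; rewrite !indicE in_setX in_setT ?andbT.
rewrite integral_empirical // ?sum_s ?size_s //; first exact: measurable_edist.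
by move=> z; exact: enorm_ge0.
Qed.

End W1_uniform_mixture.

Section sgd.
Variables (R : realType) (d m n : nat) (eta : R) (b : nat).
Variable f : 'rV[R]_d -> 'rV[R]_m -> R.
Implicit Types (X Xh : 'I_n -> 'rV[R]_m) (t : 'rV[R]_d) (Om : {set 'I_n}).

Let draws := [pred Om : {set 'I_n} | #|Om| == b].

Let card_draws_n : #|draws| = 'C(n, b).
Proof. by rewrite -cardsE card_draws card_ord. Qed.

Lemma sgd_kernelE X t : sgd_kernel eta b f X t = unif_mixture draws (sgd_step eta b f X t).
Proof. by rewrite /sgd_kernel /unif_mixture card_draws_n. Qed.

Lemma sgd_stepB X Xh t Om :
  sgd_step eta b f X t Om - sgd_step eta b f Xh t Om
  = (eta / b%:R) *: \sum_(i in Om) (grad (f ^~ (Xh i)) t - grad (f ^~ (X i)) t).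
Proof. by rewrite /sgd_step sumrB scalerBr opprB addrC addrA subrK. Qed.

Variables (X Xh : 'I_n -> 'rV[R]_m) (j : 'I_n).
Hypothesis X_Xh : forall i, i != j -> X i = Xh i.
Hypothesis eta_ge0 : 0 <= eta.

Let gap t := enorm (grad (f ^~ (Xh j)) t - grad (f ^~ (X j)) t).

Lemma edist_sgd_step t Om :
  Defs.edist (sgd_step eta b f X t Om) (sgd_step eta b f Xh t Om)
  = (j \in Om)%:R * (eta / b%:R * gap t).
Proof.
rewrite /Defs.edist sgd_stepB enormZ ger0_norm ?divr_ge0 //.
have [jOm|jNOm] := boolP (j \in Om).
  rewrite (bigD1 j) //= big1 ?addr0 ?mul1r // => i /andP[_ ij].
  by rewrite X_Xh // subrr.
rewrite big1 ?enorm0 ?mulr0 ?mul0r // => i iOm.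
by rewrite X_Xh ?subrr //; apply: contraNneq jNOm => <-.
Qed.

Lemma W1_sgd_kernel_le t : (0 < b)%N -> (b <= n)%N ->
  (W1 (sgd_kernel eta b f X t) (sgd_kernel eta b f Xh t) <= (eta / n%:R * gap t)%:E)%E.
Proof.
move=> b_gt0 b_le_n; rewrite !sgd_kernelE.
apply: le_trans (W1_unif_mixture_le _ _ _) _; first by rewrite card_draws_n bin_gt0.
have n_gt0 : (0 < n)%N by apply: leq_trans b_le_n.
have count := sum_draws_mem b j; rewrite card_ord in count.
under eq_bigr do rewrite edist_sgd_step.
rewrite -mulr_suml -natr_sum card_draws_n lee_fin le_eqVlt; apply/orP; left; apply/eqP.
have nR : n%:R != 0 :> R by rewrite pnatr_eq0 -lt0n.
have bR : b%:R != 0 :> R by rewrite pnatr_eq0 -lt0n.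
have CR : 'C(n, b)%:R != 0 :> R by rewrite pnatr_eq0 -lt0n bin_gt0.
have -> : (\sum_(Om | draws Om) (j \in Om))%:R = b%:R * 'C(n, b)%:R / n%:R :> R.
  by rewrite -!natrM -count natrM mulrAC divff ?mul1r.
by field; rewrite nR bR CR.
Qed.

End sgd.

Lemma grad_gap_le (R : realType) (d m : nat) (Xs : set 'rV[R]_m) (D K1 K2 : R)
  (f : 'rV[R]_d -> 'rV[R]_m -> R) (x xh : 'rV[R]_m) (t : 'rV[R]_d) :
  (forall x, Xs x -> enorm x <= D) -> 0 <= K2 ->
  (forall (t th : 'rV[R]_d) (x xh : 'rV[R]_m), Xs x -> Xs xh ->
     enorm (grad (f ^~ x) t - grad (f ^~ xh) th)
       <= K1 * enorm (t - th) + K2 * enorm (x - xh) * (enorm t + enorm th + 1)) ->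
  Xs x -> Xs xh ->
  enorm (grad (f ^~ x) t - grad (f ^~ xh) t) <= 2 * D * K2 * (2 * enorm t + 1).
Proof.
move=> D_bound K2_ge0 grad_lip Xs_x Xs_xh.
apply: le_trans (grad_lip t t x xh Xs_x Xs_xh) _.
rewrite subrr enorm0 mulr0 add0r.
have x_xh_le : enorm (x - xh) <= 2 * D.
  apply: le_trans (enormB_le x xh) _.
  by have := D_bound x Xs_x; have := D_bound xh Xs_xh; lra.
have gap_ge0 : 0 <= 2 * D - enorm (x - xh) by rewrite subr_ge0.
have t_ge0 := enorm_ge0 t.
have := mulr_ge0 (mulr_ge0 K2_ge0 gap_ge0) (addr_ge0 (addr_ge0 t_ge0 t_ge0) ler01).
lra.
Qed.

Lemma affine_le_V_weight (R : realDomainType) (a r s : R) : 0 <= a -> 0 <= r ->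
  s <= r + a -> 2 * s + 1 <= 2 * (2 * a + 1) * (1 + r ^+ 2).
Proof. move=> a_ge0 r_ge0 s_le; have := sqr_ge0 (r - 1); nra. Qed.

Theorem lemmaC3 (R : realType) (d m n b : nat) (Xs : set 'rV[R]_m)
  (D K1 K2 eta : R) (f : 'rV[R]_d -> 'rV[R]_m -> R)
  (X Xh : 'I_n -> 'rV[R]_m) (thstar : 'rV[R]_d) :
  (forall x, Xs x -> enorm x <= D) ->
  (forall x, Xs x -> forall t : 'rV[R]_d, differentiable (f ^~ x) t) ->
  0 < K1 -> 0 < K2 ->
  (forall (t th : 'rV[R]_d) (x xh : 'rV[R]_m), Xs x -> Xs xh ->
     enorm (grad (f ^~ x) t - grad (f ^~ xh) th)
       <= K1 * enorm (t - th) + K2 * enorm (x - xh) * (enorm t + enorm th + 1)) ->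
  (forall i, Xs (X i)) -> (forall i, Xs (Xh i)) ->
  (exists j : 'I_n, forall i, i != j -> X i = Xh i) ->
  (0 < b)%N -> (b <= n)%N -> 0 < eta ->
  (forall t, emp_risk f Xh thstar <= emp_risk f Xh t) ->
  (ereal_sup [set (W1 (sgd_kernel eta b f X t) (sgd_kernel eta b f Xh t)
                    * ((1 + enorm (t - thstar) ^+ 2)^-1)%:E)%E
             | t in [set: 'rV[R]_d]]
     <= (4 * D * K2 * eta / n%:R * (2 * enorm thstar + 1))%:E)%E.
Proof.
move=> D_bound _ _ K2_gt0 grad_lip X_in Xh_in [j X_Xh] b_gt0 b_le_n eta_gt0 _.
have D_ge0 : 0 <= D := le_trans (enorm_ge0 _) (D_bound _ (X_in j)).
apply: ub_ereal_sup => _ [t _ <-].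
set r := enorm (t - thstar); set a := enorm thstar.
have V_gt0 : 0 < 1 + r ^+ 2 by rewrite ltr_wpDr ?sqr_ge0.
have t_le : enorm t <= r + a by rewrite -{1}(subrK thstar t) enormD.
have W1_le := W1_sgd_kernel_le f X_Xh (ltW eta_gt0) t b_gt0 b_le_n.
apply: le_trans (lee_wpmul2r _ W1_le) _; first by rewrite lee_fin invr_ge0 ltW.
rewrite -EFinM lee_fin ler_pdivrMr //.
have gap_le := grad_gap_le t D_bound (ltW K2_gt0) grad_lip (Xh_in j) (X_in j).
have eta_n_ge0 : 0 <= eta / n%:R by rewrite divr_ge0 // ltW.
apply: le_trans (ler_wpM2l eta_n_ge0 gap_le) _.
have -> : 4 * D * K2 * eta / n%:R * (2 * a + 1) * (1 + r ^+ 2)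
          = eta / n%:R * (2 * D * K2 * (2 * (2 * a + 1) * (1 + r ^+ 2))) by ring.
apply: ler_wpM2l => //; apply: ler_wpM2l; first by rewrite !mulr_ge0 // ltW.
exact: affine_le_V_weight (enorm_ge0 _) (enorm_ge0 _) t_le.
Qed.
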